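(* For every directed acyclic graph $D$ with distinct nodes $s,t$ and costs $c:E(D)\to\mathbb{R}_+$, the following holds. The minimum cost of an integral solution of the odd path blocker LP $$\min\Big\{\sum_{e\in E(D)}c(e)x_e : \sum_{e\in P}x_e\ge1 \text{ for every odd-length } s\rightarrow t \text{ path } P \text{ in } D,\ x\ge0\Big\}$$ is at most twice the LP optimum. That is, the integrality gap of the odd path blocker LP in DAGs is at most $2$.
   Context: Paths are simple directed paths; odd-length means an odd number of edges. Integral solutions are the $0/1$ vectors $x$ satisfying the path constraints. *)

From HB Require Import structures.
From mathcomp Require Import all_boot all_order all_algebra.
Set Implicit Arguments. Unset Strict Implicit. Unset Printing Implicit Defensive.
Import Order.TTheory GRing.Theory Num.Theory.

Section Digraph.
Variables (V E : finType) (tl hd : E -> V).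

Fixpoint is_walk (u : V) (p : seq E) (w : V) : bool :=
  match p with
  | [::] => u == w
  | e :: p' => (tl e == u) && is_walk (hd e) p' w
  end.

Definition walk_nodes (u : V) (p : seq E) : seq V := u :: map hd p.

Definition is_path (u : V) (p : seq E) (w : V) : bool :=
  is_walk u p w && uniq (walk_nodes u p).

Definition acyclic : Prop :=
  forall (u : V) (p : seq E), p != [::] -> ~~ is_walk u p u.

Definition odd_path (s t : V) (p : seq E) : bool :=
  is_path s p t && odd (size p).

Local Open Scope ring_scope.
Definition opb_feasible (R : numDomainType) (s t : V) (x : E -> R) : Prop :=
  (forall e, 0 <= x e) /\
  (forall p, odd_path s t p -> 1 <= \sum_(e <- p) x e).

Definition opb_integral (R : numDomainType) (s t : V) (y : E -> R) : Prop :=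
  (forall e, y e = 0 \/ y e = 1) /\ opb_feasible s t y.

Definition cost (R : numDomainType) (c x : E -> R) : R := \sum_(e : E) c e * x e.
End Digraph.

(* Pass to the bipartite double cover of D, whose nodes (v, b) record the
   parity b of the number of edges used so far: odd s-t paths of D become walks
   from (s, false) to (t, true).  Let a be the x-distance from (s, false) in the
   cover, truncated at 1.  Feasibility of x gives a (t, true) = 1, and a grows by
   at most x e along each of the two copies of an edge e.  Hence for every level
   th in (0, 1], taking every edge with a copy crossing level th upwards meets
   all odd s-t paths.  Averaged over th, the c-cost of the crossing copies is the
   c-weighted total growth of a, at most 2 * cost c x since each edge has two
   copies; some level does no worse than the average. *)

From HB Require Import structures.
From mathcomp Require Import all_boot all_order all_algebra.
From mathcomp Require Import lra.
Set Implicit Arguments. Unset Strict Implicit. Unset Printing Implicit Defensive.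
Import Order.TTheory GRing.Theory Num.Theory.

Section Walks.
Variables (V E : finType) (tl hd : E -> V).

Lemma walk_cat u p m q w : is_walk tl hd u p m -> is_walk tl hd m q w ->
  is_walk tl hd u (p ++ q) w.
Proof.
elim: p u => [|e p IH] u /=; first by move=> /eqP ->.
by move=> /andP[-> walk_p] walk_q; rewrite (IH _ walk_p walk_q).
Qed.

Lemma walk_to_walk_node u p w v : is_walk tl hd u p w -> v \in walk_nodes hd u p ->
  exists q, is_walk tl hd u q v.
Proof.
elim: p u => [|e p IH] u /=.
  by move=> /eqP ->; rewrite inE => /eqP ->; exists [::] => /=.
move=> /andP[/eqP tl_e walk_p]; rewrite inE => /orP[/eqP ->|v_p].
  by exists [::] => /=.
have [q walk_q] := IH _ walk_p v_p.
by exists (e :: q); rewrite /= tl_e eqxx walk_q.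
Qed.

Hypothesis acyclicD : acyclic tl hd.

Lemma acyclic_walk_uniq u p w : is_walk tl hd u p w -> uniq (walk_nodes hd u p).
Proof.
elim: p u => [|e p IH] u //= /andP[/eqP tl_e walk_p].
have := IH _ walk_p; rewrite /walk_nodes /= => ->; rewrite andbT.
apply/negP => u_p.
have [q walk_q] := walk_to_walk_node walk_p (u_p : u \in walk_nodes hd (hd e) p).
by have := @acyclicD u (e :: q) isT; rewrite /= tl_e eqxx walk_q.
Qed.

Lemma acyclic_walk_size u p w : is_walk tl hd u p w -> (size p < #|V|)%N.
Proof.
move=> walk_p; have := max_card (mem (walk_nodes hd u p)).
by rewrite (card_uniqP (acyclic_walk_uniq walk_p)) /walk_nodes /= size_map.
Qed.

End Walks.

Local Open Scope ring_scope.

Lemma walk_crossing_edge (R : realDomainType) (N K : finType) (tl hd : K -> N)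
    (f : N -> R) th u q w :
  is_walk tl hd u q w -> f u < th -> th <= f w ->
  exists2 k, k \in q & f (tl k) < th <= f (hd k).
Proof.
elim: q u => [|k q IH] u /=; first by move=> /eqP -> /lt_le_trans/[apply]; rewrite ltxx.
move=> /andP[/eqP tl_k walk_q] fu_lt fw_ge.
case: (lerP th (f (hd k))) => [fk_ge|fk_lt].
  by exists k; rewrite ?inE ?eqxx // tl_k fu_lt.
by have [k' k'_q cross_k'] := IH _ walk_q fk_lt fw_ge; exists k'; rewrite // inE k'_q orbT.
Qed.

Section DoubleCover.
Variables (V E : finType) (tl hd : E -> V).

Definition cover_tl (k : E * bool) : V * bool := (tl k.1, k.2).
Definition cover_hd (k : E * bool) : V * bool := (hd k.1, ~~ k.2).

Lemma cover_walk_proj u b p w b' : is_walk cover_tl cover_hd (u, b) p (w, b') ->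
  is_walk tl hd u (map fst p) w /\ b' = b (+) odd (size p).
Proof.
elim: p u b => [|[e c] p IH] u b /=.
  by move=> /eqP [-> ->]; rewrite eqxx addbF.
move=> /andP[/eqP [tl_e ->] walk_p]; have [walk_fst ->] := IH _ _ walk_p.
by rewrite tl_e eqxx walk_fst; split=> //=; rewrite addNb addbN.
Qed.

Fixpoint cover_lift (b : bool) (p : seq E) : seq (E * bool) :=
  if p is e :: p' then (e, b) :: cover_lift (~~ b) p' else [::].

Lemma map_fst_cover_lift b p : map fst (cover_lift b p) = p.
Proof. by elim: p b => //= e p IH b; rewrite IH. Qed.

Lemma cover_lift_walk u b p w : is_walk tl hd u p w ->
  is_walk cover_tl cover_hd (u, b) (cover_lift b p) (w, b (+) odd (size p)).
Proof.
elim: p u b => [|e p IH] u b /=; first by move=> /eqP ->; rewrite addbF.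
move=> /andP[/eqP tl_e walk_p]; rewrite /cover_tl tl_e eqxx /=.
by have := IH _ (~~ b) walk_p; rewrite /cover_hd /=; case: b; case: (odd _).
Qed.

End DoubleCover.

Section ThresholdRounding.
Variables (R : realFieldType) (N K : finType) (tl hd : K -> N) (w : K -> R).
Hypothesis w_ge0 : forall k, 0 <= w k.

Definition cross_ind (p q th : R) : R := if p < th <= q then 1 else 0.
(* [rise lo p q] is the length of the set of levels th > lo with p < th <= q,
   so [stretch a lo] is the integral of [cut a] over (lo, +oo). *)
Definition rise (lo p q : R) : R := Num.max 0 (Num.max lo q - Num.max lo p).

Definition cut (a : N -> R) (th : R) : R :=
  \sum_k w k * cross_ind (a (tl k)) (a (hd k)) th.
Definition stretch (a : N -> R) (lo : R) : R :=
  \sum_k w k * rise lo (a (tl k)) (a (hd k)).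

Lemma cross_ind_ge0 p q th : 0 <= cross_ind p q th.
Proof. by rewrite /cross_ind; case: ifP. Qed.

Lemma rise_ge0 lo p q : 0 <= rise lo p q.
Proof. by rewrite /rise le_max lexx. Qed.

Lemma max_off_gap (lo b p : R) : lo < b -> ~~ (lo < p < b) ->
  Num.max lo p = if p < b then lo else p.
Proof.
rewrite negb_and -!leNgt => lo_b /orP[p_lo|b_p].
  by rewrite (max_l p_lo) (le_lt_trans p_lo lo_b).
by rewrite (max_r (le_trans (ltW lo_b) b_p)) ltNge b_p.
Qed.

Lemma rise_split lo b p q : lo < b -> ~~ (lo < p < b) -> ~~ (lo < q < b) ->
  rise lo p q = (b - lo) * cross_ind p q b + rise b p q.
Proof.
rewrite /rise /cross_ind => lo_b /(max_off_gap lo_b) -> /(max_off_gap lo_b) ->.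
case: (ltrP p b) => p_b; case: (ltrP q b) => q_b /=;
  repeat match goal with |- context [Num.max ?x ?y] => case: (ltrP x y) => ? end;
  lra.
Qed.

Lemma stretch_ge0 a lo : 0 <= stretch a lo.
Proof. by apply: sumr_ge0 => k _; rewrite mulr_ge0 ?rise_ge0. Qed.

Lemma stretch_split a lo b : lo < b -> (forall v, ~~ (lo < a v < b)) ->
  stretch a lo = (b - lo) * cut a b + stretch a b.
Proof.
move=> lo_b gap_a; rewrite /stretch /cut mulr_sumr -big_split /=.
by apply: eq_bigr => k _; rewrite (rise_split lo_b (gap_a _) (gap_a _)) mulrDr mulrCA.
Qed.

Lemma threshold_base a lo : lo < 1 -> (forall v, ~~ (lo < a v < 1)) ->
  (1 - lo) * cut a 1 <= stretch a lo.
Proof.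
by move=> lo_1 gap_a; rewrite (stretch_split lo_1 gap_a) lerDl stretch_ge0.
Qed.

Lemma threshold_step a lo b : lo < b -> b < 1 -> (forall v, ~~ (lo < a v < b)) ->
  (exists2 th, b < th <= 1 & (1 - b) * cut a th <= stretch a b) ->
  exists2 th, lo < th <= 1 & (1 - lo) * cut a th <= stretch a lo.
Proof.
move=> lo_b b_1 gap_a [th /andP[b_th th_1] cut_th].
rewrite (stretch_split lo_b gap_a).
have split_1 y : (1 - lo) * y = (b - lo) * y + (1 - b) * y.
  by rewrite -mulrDl; congr (_ * _); lra.
have [le_cut|lt_cut] := lerP (cut a b) (cut a th).
  exists b; first by rewrite lo_b ltW.
  by rewrite split_1 lerD2l (le_trans _ cut_th) // ler_wpM2l // subr_ge0 ltW.
exists th; first by rewrite (lt_trans lo_b b_th) th_1.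
by rewrite split_1 lerD // ler_wpM2l ?subr_ge0 ?ltW.
Qed.

(* Averaging without integrals: induction on the number of values of a in
   (lo, 1), peeling off the layer between lo and the least of them. *)
Lemma threshold_exists a lo : lo < 1 ->
  exists2 th, lo < th <= 1 & (1 - lo) * cut a th <= stretch a lo.
Proof.
have [n] := ubnP #|[set v | lo < a v < 1]|.
elim: n lo => // n IH lo; rewrite ltnS => card_gap lo_1.
have [v0 v0_gap|no_gap] := pickP (fun v => lo < a v < 1); last first.
  by exists 1; rewrite ?lo_1 ?lexx // threshold_base // => v; rewrite no_gap.
have [m /andP[lo_m m_1] m_min] := @arg_minP _ _ _ v0 (fun v => lo < a v < 1) a v0_gap.
apply: (threshold_step lo_m m_1) => [v|].
  apply/negP => /andP[lo_v v_m]; move: (m_min v).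
  by rewrite lo_v (lt_trans v_m m_1) leNgt v_m => /(_ isT).
apply: IH (m_1); apply: leq_trans card_gap; apply: proper_card; apply/properP; split.
  by apply/subsetP => v; rewrite !inE => /andP[m_v ->]; rewrite (lt_trans lo_m m_v).
by exists m; rewrite !inE ?ltxx ?lo_m ?m_1.
Qed.

End ThresholdRounding.

Section OddDistance.
Variables (R : realFieldType) (V E : finType) (tl hd : E -> V) (s t : V) (x : E -> R).
Hypothesis acyclicD : acyclic tl hd.
Hypothesis x_feasible : opb_feasible tl hd s t x.

Local Notation cover_walk := (is_walk (cover_tl tl) (cover_hd hd)).

Let x_ge0 e : 0 <= x e. Proof. by case: x_feasible. Qed.

Definition cover_weight (p : seq (E * bool)) : R := \sum_(k <- p) x k.1.

(* Truncation at 1 also covers nodes unreachable from (s, false); walks in the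
   cover project to walks of D, so by acyclicity they have at most #|V| edges. *)
Definition odd_dist (v : V * bool) : R :=
  \big[Num.min/1]_(p : #|V|.-bseq (E * bool) | cover_walk (s, false) p v) cover_weight p.

Lemma cover_weight_ge0 p : 0 <= cover_weight p.
Proof. exact: sumr_ge0. Qed.

Lemma odd_dist_ge0 v : 0 <= odd_dist v.
Proof. by apply: le_bigmin => // p _; apply: cover_weight_ge0. Qed.

Lemma odd_dist_le1 v : odd_dist v <= 1.
Proof. exact: bigmin_le_id. Qed.

Lemma odd_dist_le_walk p v : cover_walk (s, false) p v -> odd_dist v <= cover_weight p.
Proof.
case: v => v b walk_p; have [walk_fst _] := cover_walk_proj walk_p.
have size_p : (size p <= #|V|)%N.
  by rewrite -(size_map fst) ltnW ?(acyclic_walk_size acyclicD walk_fst).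
exact: (@bigmin_le_cond _ _ _ _ (Bseq size_p)).
Qed.

Lemma odd_dist_witness v : odd_dist v < 1 ->
  exists2 p, cover_walk (s, false) p v & cover_weight p <= odd_dist v.
Proof.
rewrite /odd_dist; elim/big_rec: _ => [|p d walk_p IH]; first by rewrite ltxx.
by case: (lerP (cover_weight p) d) => [_ _|_ /IH//]; exists p.
Qed.

Lemma odd_dist_source : odd_dist (s, false) = 0.
Proof.
apply/le_anti; rewrite odd_dist_ge0 andbT.
by have := @odd_dist_le_walk [::] (s, false) (eqxx _); rewrite /cover_weight big_nil.
Qed.

Lemma odd_dist_edge k : odd_dist (cover_hd hd k) <= odd_dist (cover_tl tl k) + x k.1.
Proof.
have [tl_far|tl_near] := lerP 1 (odd_dist (cover_tl tl k)).
  by have := odd_dist_le1 (cover_hd hd k); have := x_ge0 k.1; lra.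
have [p walk_p weight_p] := odd_dist_witness tl_near.
have walk_pk : cover_walk (s, false) (rcons p k) (cover_hd hd k).
  by rewrite -cats1; apply: walk_cat walk_p _; rewrite /= !eqxx.
apply: le_trans (odd_dist_le_walk walk_pk) _.
by rewrite /cover_weight -cats1 big_cat big_seq1 lerD2r.
Qed.

Lemma odd_dist_target : odd_dist (t, true) = 1.
Proof.
apply/le_anti; rewrite odd_dist_le1 leNgt; apply/negP => dist_lt1.
have [p walk_p weight_p] := odd_dist_witness dist_lt1.
have [walk_fst] := cover_walk_proj walk_p; rewrite addFb => odd_p.
have odd_fst : odd_path tl hd s t (map fst p).
  rewrite /odd_path /is_path walk_fst size_map -odd_p.
  by rewrite (acyclic_walk_uniq acyclicD walk_fst).
case: x_feasible => _ /(_ _ odd_fst); rewrite big_map -/(cover_weight p).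
lra.
Qed.

Lemma rise_odd_dist_le k :
  rise 0 (odd_dist (cover_tl tl k)) (odd_dist (cover_hd hd k)) <= x k.1.
Proof.
rewrite /rise !(max_r (odd_dist_ge0 _)) ge_max x_ge0 /=.
by have := odd_dist_edge k; lra.
Qed.

Lemma stretch_odd_dist_le (c : E -> R) : (forall e, 0 <= c e) ->
  stretch (cover_tl tl) (cover_hd hd) (fun k => c k.1) odd_dist 0 <= 2 * cost c x.
Proof.
move=> c_ge0; apply: le_trans (_ : \sum_(k : E * bool) c k.1 * x k.1 <= _).
  by apply: ler_sum => k _; rewrite ler_wpM2l ?rise_odd_dist_le.
have -> : \sum_(k : E * bool) c k.1 * x k.1 = \sum_e \sum_(b : bool) c e * x e.
  by rewrite pair_bigA.
by rewrite /cost mulr_sumr; apply: ler_sum => e _; rewrite big_bool /= mulr2n mulrDl !mul1r.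
Qed.

Definition odd_round (th : R) (e : E) : R :=
  if [exists b, odd_dist (cover_tl tl (e, b)) < th <= odd_dist (cover_hd hd (e, b))]
  then 1 else 0.

Lemma odd_round_integral th : 0 < th <= 1 -> opb_integral tl hd s t (odd_round th).
Proof.
move=> /andP[th_gt0 th_le1].
have round01 e : odd_round th e = 0 \/ odd_round th e = 1.
  by rewrite /odd_round; case: ifP; [right|left].
have round_ge0 e : 0 <= odd_round th e by case: (round01 e) => ->.
split=> //; split=> // p /andP[/andP[walk_p _] odd_p].
have := cover_lift_walk false walk_p; rewrite odd_p => walk_lift.
have dist_s : odd_dist (s, false) < th by rewrite odd_dist_source.
have dist_t : th <= odd_dist (t, true) by rewrite odd_dist_target.
have [k k_lift cross_k] := walk_crossing_edge walk_lift dist_s dist_t.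
have k_p : k.1 \in p by rewrite -(map_fst_cover_lift false p) map_f.
have round_k : odd_round th k.1 = 1.
  by rewrite /odd_round; case: existsP => // -[]; exists k.2; case: k cross_k {k_lift k_p}.
by rewrite (big_rem _ k_p) round_k lerDl sumr_ge0.
Qed.

Lemma odd_round_le_cross th e : odd_round th e <=
  \sum_(b : bool) cross_ind (odd_dist (cover_tl tl (e, b))) (odd_dist (cover_hd hd (e, b))) th.
Proof.
have cross_ge0 b :=
  cross_ind_ge0 (odd_dist (cover_tl tl (e, b))) (odd_dist (cover_hd hd (e, b))) th.
rewrite /odd_round; case: existsP => [[b cross_b]|_]; last exact: sumr_ge0.
by rewrite (bigD1 b) //= {1}/cross_ind cross_b lerDl sumr_ge0.
Qed.

Lemma cost_odd_round_le (c : E -> R) th : (forall e, 0 <= c e) ->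
  cost c (odd_round th) <= cut (cover_tl tl) (cover_hd hd) (fun k => c k.1) odd_dist th.
Proof.
move=> c_ge0; rewrite /cut /cost.
have -> : \sum_(k : E * bool)
    c k.1 * cross_ind (odd_dist (cover_tl tl k)) (odd_dist (cover_hd hd k)) th =
  \sum_e \sum_(b : bool)
    c e * cross_ind (odd_dist (cover_tl tl (e, b))) (odd_dist (cover_hd hd (e, b))) th.
  by rewrite pair_bigA.
by apply: ler_sum => e _; rewrite -mulr_sumr ler_wpM2l ?odd_round_le_cross.
Qed.

End OddDistance.

Theorem corollary3p6 (R : realFieldType) (V E : finType) (tl hd : E -> V)
    (s t : V) (c : E -> R) :
  acyclic tl hd -> s != t -> (forall e, 0 <= c e) ->
  forall x : E -> R, opb_feasible tl hd s t x ->
  exists y : E -> R, opb_integral tl hd s t y /\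
    cost c y <= 2 * cost c x.
Proof.
move=> acyclicD _ c_ge0 x x_feasible.
have [th th_range cut_th] := threshold_exists (cover_tl tl) (cover_hd hd)
  (fun k => c_ge0 k.1) (odd_dist tl hd s x) ltr01.
rewrite subr0 mul1r in cut_th.
exists (odd_round tl hd s x th); split.
  exact: (odd_round_integral acyclicD x_feasible th_range).
apply: (le_trans (cost_odd_round_le tl hd s x th c_ge0)).
exact: (le_trans cut_th (stretch_odd_dist_le acyclicD x_feasible c_ge0)).
Qed.
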